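(* Consider a $k$-stage screening process over a finite set $\mathcal X$ of groups in which all tests are minimally effective, i.e. $\tau^i_{X1}>\tau^i_{X0}\ge0$ for all $X\in\mathcal X$, $i\in[k]$. Among promotion policies satisfying Equal Opportunity (for which precision is defined), the maximum interview efficiency is attained by the Opportunity Ratio policy, and it equals $$\frac{\|q\|_1}{\|q\|_1+\sum_{X\in\mathcal X}u_X\prod_{i=1}^k(\tau^i_{X0}/\tau^i_{X1})}.$$
   Context: Each group $X$ has base rate $q_X$ (probability a member is qualified), $u_X=1-q_X$, and $\|q\|_1=\sum_Xq_X$. At stage $i$, $\tau^i_{X1}$ (resp. $\tau^i_{X0}$) is the probability a qualified (resp. unqualified) member of group $X$ passes test $i$. A policy specifies $\pi^i_{X1},\pi^i_{X0}\in[0,1]$, the probabilities that a member of $X$ who passes (resp. fails) test $i$ is promoted to stage $i+1$ (promotion depends only on group and current test outcome). Let $M_X=\prod_{i=1}^k(\tau^i_{X1}\pi^i_{X1}+(1-\tau^i_{X1})\pi^i_{X0})$ and $N_X=\prod_{i=1}^k(\tau^i_{X0}\pi^i_{X1}+(1-\tau^i_{X0})\pi^i_{X0})$ (probabilities that a qualified, resp. unqualified, member of $X$ reaches the final interview). The policy satisfies Equal Opportunity if $M_X$ is the same for all $X$. Interview efficiency (precision) is $\frac{\sum_Xq_XM_X}{\sum_X(q_XM_X+u_XN_X)}$, defined when the denominator is positive. Opportunity Ratio policy: let $X^*=\arg\min_X\prod_j\tau^j_{X1}$ and $\rho_X=\prod_{j=1}^k\tau^j_{X^*1}/\tau^j_{X1}$;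 set $\pi^1_{X1}=\rho_X$, $\pi^1_{X0}=0$, and $\pi^i_{X1}=1,\pi^i_{X0}=0$ for $i\ge2$. *)

From mathcomp Require Import all_boot all_order all_algebra.
Set Implicit Arguments. Unset Strict Implicit. Unset Printing Implicit Defensive.
Import Order.TTheory GRing.Theory Num.Theory.
Local Open Scope ring_scope.

Section Screening.
Variables (R : realFieldType) (G : finType) (k : nat).

(* A policy: pi1 X i (resp. pi0 X i) = probability that a member of X who
   passes (resp. fails) test i is promoted to stage i+1. Stages are 'I_k. *)
Definition valid_policy (pi1 pi0 : G -> 'I_k -> R) : Prop :=
  forall X i, 0 <= pi1 X i <= 1 /\ 0 <= pi0 X i <= 1.

(* M_X (with tau = tau1) and N_X (with tau = tau0). *)
Definition reach_prob (tau : 'I_k -> G -> R) (pi1 pi0 : G -> 'I_k -> R) (X : G) : R :=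
  \prod_(i < k) (tau i X * pi1 X i + (1 - tau i X) * pi0 X i).

Definition equal_opportunity (tau1 : 'I_k -> G -> R) (pi1 pi0 : G -> 'I_k -> R) : Prop :=
  forall X Y, reach_prob tau1 pi1 pi0 X = reach_prob tau1 pi1 pi0 Y.

Definition precision_denom (q : G -> R) (tau1 tau0 : 'I_k -> G -> R)
  (pi1 pi0 : G -> 'I_k -> R) : R :=
  \sum_X (q X * reach_prob tau1 pi1 pi0 X + (1 - q X) * reach_prob tau0 pi1 pi0 X).

Definition precision_defined q tau1 tau0 pi1 pi0 : Prop :=
  0 < precision_denom q tau1 tau0 pi1 pi0.

Definition efficiency (q : G -> R) (tau1 tau0 : 'I_k -> G -> R)
  (pi1 pi0 : G -> 'I_k -> R) : R :=
  (\sum_X q X * reach_prob tau1 pi1 pi0 X) / precision_denom q tau1 tau0 pi1 pi0.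

(* Opportunity Ratio policy, given a minimiser Xs of prod_j tau^j_{X1}. *)
Definition rho (tau1 : 'I_k -> G -> R) (Xs X : G) : R :=
  \prod_(j < k) (tau1 j Xs / tau1 j X).

Definition OR_pi1 (tau1 : 'I_k -> G -> R) (Xs : G) : G -> 'I_k -> R :=
  fun X i => if val i == 0%N then rho tau1 Xs X else 1.

Definition OR_pi0 : G -> 'I_k -> R := fun _ _ => 0.

End Screening.

From mathcomp Require Import all_boot all_order all_algebra.
From mathcomp Require Import ring lra.
Import Order.TTheory GRing.Theory Num.Theory.
Set Implicit Arguments. Unset Strict Implicit. Unset Printing Implicit Defensive.
Local Open Scope ring_scope.

(* At each stage, with c = tau0/tau1 in [0,1], the unqualified promotion
   probability tau0 p1 + (1-tau0) p0 is at least c (tau1 p1 + (1-tau1) p0), since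
   the difference is (1-c) p0.  Multiplying over the stages, N_X >= M_X r_X with
   r_X = prod_i tau0_i/tau1_i, for every policy.  Under Equal Opportunity all M_X
   equal some M, so the precision M |q| / (M |q| + sum u_X N_X) is at most
   |q| / (|q| + sum u_X r_X).  The Opportunity Ratio policy promotes only on a pass
   (so p0 = 0 and the stage inequality is an equality) and rescales the first
   stage so that every M_X equals the smallest product prod_i tau1_i; hence it
   attains the bound. *)

Lemma ler_stage_ratio (R : realFieldType) (a b p1 p0 : R) :
  0 <= a -> a < b -> b <= 1 -> 0 <= p1 <= 1 -> 0 <= p0 <= 1 ->
  0 <= a / b * (b * p1 + (1 - b) * p0) <= a * p1 + (1 - a) * p0.
Proof.
move=> a_ge0 lt_ab b_le1 /andP[p1_ge0 p1_le1] /andP[p0_ge0 p0_le1].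
have b_gt0 : 0 < b by apply: le_lt_trans lt_ab.
set c := a / b.
have cb_eq : c * b = a by rewrite /c mulfVK // gt_eqF.
have c_ge0 : 0 <= c by rewrite /c divr_ge0 // ltW.
have c_le1 : c <= 1 by rewrite /c ler_pdivrMr // mul1r ltW.
rewrite -cb_eq; apply/andP; split; last by nra.
by apply: mulr_ge0 => //; apply: addr_ge0; apply: mulr_ge0 => //; lra.
Qed.

Lemma efficiency_equal_reach (R : realFieldType) (G : finType) (k : nat)
    (q : G -> R) (tau1 tau0 : 'I_k -> G -> R) (pi1 pi0 : G -> 'I_k -> R) (M : R) :
  (forall X, reach_prob tau1 pi1 pi0 X = M) ->
  efficiency q tau1 tau0 pi1 pi0
    = M * (\sum_X q X) / precision_denom q tau1 tau0 pi1 pi0.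
Proof.
move=> reachM; rewrite /efficiency.
by under eq_bigr => X _ do rewrite reachM; rewrite -mulr_suml [_ * M]mulrC.
Qed.

Lemma ler_scaled_ratio (R : realFieldType) (M S T D : R) :
  0 < S -> 0 <= T -> 0 < D -> M * (S + T) <= D ->
  M * S / D <= S / (S + T).
Proof.
move=> S_gt0 T_ge0 D_gt0 le_D.
have ST_gt0 : 0 < S + T by apply: ltr_wpDr.
rewrite ler_pdivlMr // mulrAC ler_pdivrMr //.
by rewrite [M * S]mulrC -mulrA ler_wpM2l // ltW.
Qed.

Lemma rhoE (R : realFieldType) (G : finType) (k : nat)
    (tau1 : 'I_k -> G -> R) (Xs X : G) :
  rho tau1 Xs X = (\prod_(i < k) tau1 i Xs) / \prod_(i < k) tau1 i X.
Proof. by rewrite /rho prodf_div. Qed.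

Lemma reach_prob_OR (R : realFieldType) (G : finType) (k : nat)
    (tau tau1 : 'I_k -> G -> R) (Xs X : G) :
  reach_prob tau (OR_pi1 tau1 Xs) (@OR_pi0 R G k) X
    = \prod_(i < k) tau i X * rho tau1 Xs X.
Proof.
have first_stage_only :
    \prod_(i < k) (if val i == 0%N then rho tau1 Xs X else 1) = rho tau1 Xs X.
  case: k tau tau1 => [|k] tau tau1; first by rewrite big_ord0 /rho big_ord0.
  by rewrite big_ord_recl /= big1 ?mulr1.
rewrite /reach_prob -first_stage_only -big_split /=.
by apply: eq_bigr => i _; rewrite /OR_pi0 mulr0 addr0.
Qed.

Section Screening.
Variables (R : realFieldType) (G : finType) (k : nat).
Variables (q : G -> R) (tau1 tau0 : 'I_k -> G -> R).
Hypothesis q01 : forall X, 0 <= q X <= 1.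
Hypothesis htau :
  forall i X, [/\ 0 <= tau0 i X, tau0 i X < tau1 i X & tau1 i X <= 1].

Definition reach_ratio (X : G) : R := \prod_(i < k) (tau0 i X / tau1 i X).

Local Notation T := (\sum_X (1 - q X) * reach_ratio X).

Lemma tau1_gt0 i X : 0 < tau1 i X.
Proof. by have [tau0_ge0 lt_tau _] := htau i X; apply: le_lt_trans lt_tau. Qed.

Lemma reach_ratio_ge0 X : 0 <= reach_ratio X.
Proof.
apply: prodr_ge0 => i _; have [tau0_ge0 _ _] := htau i X.
exact: divr_ge0 tau0_ge0 (ltW (tau1_gt0 i X)).
Qed.

Lemma unqualified_sum_ge0 : 0 <= T.
Proof.
apply: sumr_ge0 => X _; apply: mulr_ge0; last exact: reach_ratio_ge0.
by have /andP[_ ?] := q01 X; lra.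
Qed.

Lemma ler_reach_prob0 pi1 pi0 X : valid_policy pi1 pi0 ->
  reach_prob tau1 pi1 pi0 X * reach_ratio X <= reach_prob tau0 pi1 pi0 X.
Proof.
move=> valid; rewrite /reach_prob /reach_ratio mulrC -big_split /=.
apply: ler_prod => i _; have [? ? ?] := htau i X; have [? ?] := valid X i.
exact: ler_stage_ratio.
Qed.

Lemma ler_precision_denom pi1 pi0 M :
  valid_policy pi1 pi0 -> (forall X, reach_prob tau1 pi1 pi0 X = M) ->
  M * (\sum_X q X + T) <= precision_denom q tau1 tau0 pi1 pi0.
Proof.
move=> valid reachM; rewrite /precision_denom mulrDr !mulr_sumr -big_split /=.
apply: ler_sum => X _; rewrite reachM [q X * M]mulrC lerD2l mulrCA.
apply: ler_wpM2l; first by have /andP[_ ?] := q01 X; lra.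
by rewrite -(reachM X) ler_reach_prob0.
Qed.

Variable Xs : G.
Hypothesis hXs : forall X, \prod_(i < k) tau1 i Xs <= \prod_(i < k) tau1 i X.

Local Notation m := (\prod_(i < k) tau1 i Xs).
Local Notation pi1_OR := (OR_pi1 tau1 Xs).
Local Notation pi0_OR := (@OR_pi0 R G k).

Lemma prod_tau1_gt0 X : 0 < \prod_(i < k) tau1 i X.
Proof. by apply: prodr_gt0 => i _; apply: tau1_gt0. Qed.

Lemma reach_prob1_OR X : reach_prob tau1 pi1_OR pi0_OR X = m.
Proof. by rewrite reach_prob_OR rhoE mulrC mulfVK // gt_eqF // prod_tau1_gt0. Qed.

Lemma reach_prob0_OR X : reach_prob tau0 pi1_OR pi0_OR X = m * reach_ratio X.
Proof. by rewrite reach_prob_OR rhoE /reach_ratio prodf_div mulrC mulrAC -mulrA. Qed.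

Lemma valid_policy_OR : valid_policy pi1_OR pi0_OR.
Proof.
move=> X i; rewrite /OR_pi1 /OR_pi0 lexx ler01; split => //.
case: ifP => _; last by rewrite ler01 lexx.
have [PX_gt0 m_gt0] := (prod_tau1_gt0 X, prod_tau1_gt0 Xs).
by rewrite rhoE divr_ge0 ?(ltW m_gt0) ?(ltW PX_gt0) //= ler_pdivrMr // mul1r hXs.
Qed.

Lemma precision_denom_OR :
  precision_denom q tau1 tau0 pi1_OR pi0_OR = m * (\sum_X q X + T).
Proof.
rewrite /precision_denom mulrDr !mulr_sumr -big_split /=.
by apply: eq_bigr => X _; rewrite reach_prob1_OR reach_prob0_OR; ring.
Qed.

End Screening.

Theorem mainTheorem11 (R : realFieldType) (G : finType) (k : nat)
  (q : G -> R) (tau1 tau0 : 'I_k -> G -> R)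
  (hq : forall X, 0 <= q X <= 1)
  (hq_pos : 0 < \sum_X q X)
  (htau : forall i X, [/\ 0 <= tau0 i X, tau0 i X < tau1 i X & tau1 i X <= 1])
  (Xs : G) (hXs : forall X, \prod_(i < k) tau1 i Xs <= \prod_(i < k) tau1 i X) :
  [/\ valid_policy (OR_pi1 tau1 Xs) (@OR_pi0 R G k),
      equal_opportunity tau1 (OR_pi1 tau1 Xs) (@OR_pi0 R G k),
      precision_defined q tau1 tau0 (OR_pi1 tau1 Xs) (@OR_pi0 R G k),
      efficiency q tau1 tau0 (OR_pi1 tau1 Xs) (@OR_pi0 R G k)
        = (\sum_X q X) /
          (\sum_X q X + \sum_X (1 - q X) * \prod_(i < k) (tau0 i X / tau1 i X))
    & forall pi1 pi0 : G -> 'I_k -> R,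
        valid_policy pi1 pi0 -> equal_opportunity tau1 pi1 pi0 ->
        precision_defined q tau1 tau0 pi1 pi0 ->
        efficiency q tau1 tau0 pi1 pi0
          <= efficiency q tau1 tau0 (OR_pi1 tau1 Xs) (@OR_pi0 R G k)].
Proof.
have m_gt0 := prod_tau1_gt0 htau Xs.
have T_ge0 := unqualified_sum_ge0 hq htau.
have ST_gt0 := ltr_wpDr T_ge0 hq_pos.
have eff_OR : efficiency q tau1 tau0 (OR_pi1 tau1 Xs) (@OR_pi0 R G k)
    = (\sum_X q X) / (\sum_X q X + \sum_X (1 - q X) * reach_ratio tau1 tau0 X).
  rewrite (efficiency_equal_reach _ _ (reach_prob1_OR htau Xs)).
  by rewrite precision_denom_OR // -mulf_div divff ?mul1r // gt_eqF.
split => //.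
- exact: valid_policy_OR.
- by move=> X Y; rewrite !(reach_prob1_OR htau).
- by rewrite /precision_defined precision_denom_OR // mulr_gt0.
move=> pi1 pi0 valid eo denom_gt0; rewrite eff_OR.
have reachM X : reach_prob tau1 pi1 pi0 X = reach_prob tau1 pi1 pi0 Xs by apply: eo.
rewrite (efficiency_equal_reach _ _ reachM); apply: ler_scaled_ratio => //.
exact: ler_precision_denom.
Qed.
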